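(* Let $\mathbb{F}$ be a finite field with $q$ elements, $q$ odd, and let $f\in\mathbb{F}[X]$ be a polynomial of degree $3$. If $q>9$, then there exists $x\in\mathbb{F}$ such that $f(x)\neq 0$ and $f(x)$ is not a square in $\mathbb{F}$. *)

From mathcomp Require Import all_boot all_algebra all_field.

From mathcomp Require Import all_boot all_algebra all_field fingroup cyclic.
From mathcomp Require Import zify ring.
Import GRing.Theory.
Local Open Scope ring_scope.

(* If every value of f is zero or a square, then a^((q+1)/2) = a for every value a
   of f, so X^q - X divides G = f^((q+1)/2) - f, say G = H (X^q - X).  Differentiating,
   with (X^q - X)' = -1, and eliminating f^((q-1)/2) gives
   (X^q - X) (f H' - ((q+1)/2) f' H) = f (H + ((q-1)/2) f').
   For q > 9 the right-hand side has degree < q, so both sides vanish and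
   H = -((q-1)/2) f' has degree at most 2, whereas deg H = (q+3)/2. *)

Section ExpSubrFactorization.
Context {R : comNzRingType} {f H Z : {poly R}} {k : nat}.
Hypotheses (fact_fHZ : f ^+ k.+1 - f = H * Z) (derivZ : Z^`() = -1).

Lemma deriv_expS_subr_factor :
  Z * (f * H^`() - f^`() * H *+ k.+1) = f * (H + f^`() *+ k).
Proof.
have dfact : f^`() * f ^+ k *+ k.+1 - f^`() = H^`() * Z - H.
  by rewrite -[f ^+ k]/(f ^+ k.+1.-1) -deriv_exp -derivB fact_fHZ derivM derivZ mulrN1 addrC.
have -> : Z * (f * H^`() - f^`() * H *+ k.+1)
        = f * (H^`() * Z - H) + f * H - f^`() * (H * Z) *+ k.+1.
  by ring.
by rewrite -dfact -fact_fHZ exprS; ring.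
Qed.
End ExpSubrFactorization.

Lemma cubic_expS_subr_ndvdp (R : fieldType) (f Z : {poly R}) (k : nat) :
  size f = 4%N -> size Z = k.*2.+2 -> (4 < k)%N -> Z^`() = -1 ->
  ~~ (Z %| f ^+ k.+1 - f).
Proof.
move=> sf sZ gt4k derivZ; apply/negP => /divpK/esym.
move: (_ %/ Z) => H fact_fHZ.
have f_neq0 : f != 0 by rewrite -size_poly_eq0 sf.
have Z_neq0 : Z != 0 by rewrite -size_poly_eq0 sZ.
have size_fact : size (f ^+ k.+1 - f) = (3 * k.+1)%N.+1.
  have size_fk : size (f ^+ k.+1) = (3 * k.+1)%N.+1.
    by rewrite polySpred ?expf_neq0 // size_exp sf.
  by rewrite size_polyDl size_fk // size_polyN sf; lia.
have H_neq0 : H != 0.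
  by apply/eqP => H0; move: size_fact; rewrite fact_fHZ H0 mul0r size_poly0.
have sH : size H = k.+3.
  (* lia would see the two elaborations of [size H] as distinct atoms *)
  apply: (@addIn k.*2.+1).
  have := size_fact; rewrite fact_fHZ size_mul // sZ addnS /= => ->; lia.
have size_df : (size f^`() <= 3)%N by rewrite -ltnS -sf lt_size_deriv.
have size_kdf : (size (f^`() *+ k)%R <= 3)%N.
  by rewrite -scaler_nat (leq_trans (size_scale_leq _ _)).
have size_rhs : (size (f * (H + f^`() *+ k))%R <= k.+3.+3)%N.
  apply: leq_trans (size_polyMleq _ _) _; rewrite sf add4n /= !ltnS.
  by rewrite (leq_trans (size_polyD _ _)) // geq_max sH leqnn (leq_trans size_kdf).
have := deriv_expS_subr_factor fact_fHZ derivZ.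
have [-> | lhs_neq0] := eqVneq (f * H^`() - f^`() * H *+ k.+1) 0.
  rewrite mulr0 => /esym/eqP; rewrite mulf_eq0 (negbTE f_neq0) addr_eq0 => /eqP eqH.
  by move: size_kdf; rewrite -size_polyN -eqH sH; lia.
move=> eq_sides; have := dvdp_leq (mulf_neq0 Z_neq0 lhs_neq0) (dvdp_mulIl Z _).
by rewrite eq_sides sZ => /leq_trans/(_ size_rhs); lia.
Qed.

Section FiniteField.
Variable F : finFieldType.

Lemma natr_card_finField : #|F|%:R = 0 :> F.
Proof. by rewrite -cardsT -FinRing.zmodXgE expg_cardG ?inE. Qed.

Lemma size_Xcard_subX : size ('X^#|F| - 'X : {poly F}) = #|F|.+1.
Proof. by rewrite size_polyDl size_polyXn // size_polyN size_polyX ltnS finNzRing_gt1. Qed.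

Lemma deriv_Xcard_subX : ('X^#|F| - 'X : {poly F})^`() = -1.
Proof.
by rewrite derivB derivXn derivX -mulr_natr -polyC_natr natr_card_finField mulr0 sub0r.
Qed.

Lemma Xcard_subX_dvdp (p : {poly F}) : (forall x, p.[x] = 0) -> 'X^#|F| - 'X %| p.
Proof.
move=> p_eq0; rewrite finField_genPoly -big_enum uniq_roots_dvdp //.
  by apply/allP => x _; apply/rootP.
by rewrite uniq_rootsE enum_uniq.
Qed.

Lemma sqrf_expS_half_card (y : F) : odd #|F| -> (y ^+ 2) ^+ (#|F|./2).+1 = y ^+ 2.
Proof.
move=> oddF; rewrite -exprM.
have -> : (2 * (#|F|./2).+1 = #|F|.+1)%N by rewrite -{2}(odd_double_half #|F|) oddF; lia.
by rewrite exprS expf_card.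
Qed.

End FiniteField.

Theorem mainTheorem11 (F : finFieldType) (f : {poly F}) :
  odd #|F| -> (9 < #|F|)%N -> size f = 4%N ->
  exists x : F, f.[x] != 0 /\ ~~ [exists y : F, y ^+ 2 == f.[x]].
Proof.
move=> oddF gt9F sf.
have [x /andP[fx_neq0 fx_nsq] | all_sq] :=
  pickP (fun x => (f.[x] != 0) && ~~ [exists y, y ^+ 2 == f.[x]]); first by exists x.
have cardF : #|F| = (#|F|./2).*2.+1 by rewrite -{1}(odd_double_half #|F|) oddF.
have : ~~ ('X^#|F| - 'X %| f ^+ (#|F|./2).+1 - f).
  by apply: cubic_expS_subr_ndvdp; rewrite ?size_Xcard_subX ?deriv_Xcard_subX //; lia.
case/negP; apply: Xcard_subX_dvdp => x; rewrite hornerD hornerN horner_exp.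
have /nandP[/negbNE/eqP-> | /negbNE/existsP[y /eqP<-]] := all_sq x.
  by rewrite expr0n subr0.
by rewrite sqrf_expS_half_card ?subrr.
Qed.
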